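(* In the setting of the context, assume $G''(p_1)<0$, $G''(p_2)\ge0$ and $G''(p_1)G'(p_2)e^{-K_1}<G''(p_2)G'(p_1)e^{K_1}$, and that $\ell\in(0,\min\{L,1-L\})$ is chosen so that $$(L-\ell)G''(p_1)e^{-K_1}+\big[(1-L-\ell)G''(p_2)+2\ell K_2\big]e^{K_1}<0.$$ Then $I_{\theta_0+c}(1)<0<I_{\theta_0-c}(1)$ for all sufficiently small $c>0$.
   Context: Let $G\in\mathrm{C}^2(\mathbb{R})$ be coercive ($G(p)\to\infty$ as $p\to\pm\infty$), $p_1<p_2$ with $G'(p_1)<0<G'(p_2)$, $L=\frac{G'(p_2)}{G'(p_2)-G'(p_1)}$, $K_1=\max\{|G'(p)|:\,p\in[p_1,p_2]\}$, $K_2=\max\{|G''(p)|:\,p\in[p_1,p_2]\}$. Given $\ell$, let $f$ be a $1$-periodic function in $\mathrm{C}^1(\mathbb{R})$ with $f'$ Lipschitz, $p_1\le f\le p_2$, $f=p_1$ on $[0,L-\ell]$, $f=p_2$ on $[L,1-\ell]$, and $\int_0^1G'(f(x))dx=0$. Define the $1$-periodic Lipschitz potential $V(x)=-f'(x)-G(f(x))$ and $\theta_0=\int_0^1f(x)dx$. For each $\theta\in\mathbb{R}$, $f_\theta\in\mathrm{C}^1(\mathbb{R})$ denotes the unique $1$-periodic function with $\int_0^1f_\theta=\theta$ and $f_\theta'+G(f_\theta)+V=\overline{H}(\theta)$ on $\mathbb{R}$ for some (unique) constant $\overline{H}(\theta)$; and $I_\theta(1)=\int_0^1G'(f_\theta(x))dx$.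 *)

From Stdlib Require Import Reals Lra.
From Coquelicot Require Import Coquelicot.
Open Scope R_scope.

Definition D1 (G : R -> R) : R -> R := Derive G.
Definition D2 (G : R -> R) : R -> R := Derive (Derive G).

Definition is_C2 (G : R -> R) : Prop :=
  (forall x, ex_derive G x) /\
  (forall x, ex_derive (Derive G) x) /\
  (forall x, continuous (Derive (Derive G)) x).

Definition is_C1 (f : R -> R) : Prop :=
  (forall x, ex_derive f x) /\ (forall x, continuous (Derive f) x).

Definition periodic1 (f : R -> R) : Prop := forall x, f (x + 1) = f x.

Definition lipschitz (h : R -> R) : Prop :=
  exists M, forall x y, Rabs (h x - h y) <= M * Rabs (x - y).

Definition coercive (G : R -> R) : Prop :=
  filterlim G (Rbar_locally p_infty) (Rbar_locally p_infty) /\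
  filterlim G (Rbar_locally m_infty) (Rbar_locally p_infty).

Definition is_max_on (h : R -> R) (a b K : R) : Prop :=
  (forall p, a <= p <= b -> h p <= K) /\ (exists p, a <= p <= b /\ h p = K).

Definition Lconst (G : R -> R) (p1 p2 : R) : R :=
  D1 G p2 / (D1 G p2 - D1 G p1).

Definition Vpot (G f : R -> R) : R -> R := fun x => - Derive f x - G (f x).

(* g is (the) 1-periodic C^1 cell solution f_theta:
   int_0^1 g = theta and g' + G(g) + V = Hbar(theta) for some constant. *)
Definition cell_sol (G V : R -> R) (theta : R) (g : R -> R) : Prop :=
  periodic1 g /\ is_C1 g /\ RInt g 0 1 = theta /\
  exists H : R, forall x, Derive g x + G (g x) + V x = H.

Definition I1 (G g : R -> R) : R := RInt (fun x => D1 G (g x)) 0 1.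

(* Let g be a cell solution with mean theta0 + s c, where s = 1 or s = -1, and let
   e = s (g - f) (this is [gap s g f]), so that the mean of e is c > 0. Subtracting the cell
   equations of g and f gives e' = s Hbar - s (G(g) - G(f)). A comparison argument shows e > 0,
   coercivity of G bounds e a priori, and a Harnack inequality then gives e = O(c) uniformly.
   Integrating (ln e)' against the mean-zero function G'(f) shows that e stays within the
   factors exp (+-(K1 + o(1))) of e(0) on [0, 1]. Finally s I(1) = int s (G'(g) - G'(f)) is the
   integral of G''(xi) e; on the four intervals cut at L - l, L and 1 - l, where f equals p1,
   moves, equals p2 and moves again, it is bounded by e(0) times the left-hand side of the
   hypothesis up to o(1), which is negative. *)

From Stdlib Require Import Reals Lra Psatz ZArith Classical.
From Coquelicot Require Import Coquelicot.
Open Scope R_scope.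

Lemma continuity_pt_of_is_derive (h : R -> R) x l : is_derive h x l -> continuity_pt h x.
Proof.
  intro Hd. apply continuity_pt_filterlim.
  apply (ex_derive_continuous (K:=R_AbsRing) (V:=R_NormedModule)). now exists l.
Qed.

Lemma continuous_of_is_derive (h : R -> R) x l : is_derive h x l -> continuous h x.
Proof.
  intro Hd. apply (ex_derive_continuous (K:=R_AbsRing) (V:=R_NormedModule)). now exists l.
Qed.

Lemma MVT_derive (h dh : R -> R) a b :
  (forall z, Rmin a b <= z <= Rmax a b -> is_derive h z (dh z)) ->
  exists c, Rmin a b <= c <= Rmax a b /\ h b - h a = dh c * (b - a).
Proof.
  intro Hd. apply MVT_gen.
  - intros x Hx. apply Hd. lra.
  - intros x Hx. exact (continuity_pt_of_is_derive _ _ _ (Hd x Hx)).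
Qed.

Lemma Rabs_sub_le_of_derive_bound (h dh : R -> R) a b K :
  (forall z, Rmin a b <= z <= Rmax a b -> is_derive h z (dh z)) ->
  (forall z, Rmin a b <= z <= Rmax a b -> Rabs (dh z) <= K) ->
  Rabs (h b - h a) <= K * Rabs (b - a).
Proof.
  intros Hd Hb. destruct (MVT_derive h dh a b Hd) as [c [Hc ->]].
  rewrite Rabs_mult. apply Rmult_le_compat_r; [apply Rabs_pos | now apply Hb].
Qed.

Lemma scaled_increment_le (h dh : R -> R) a b k B : 0 <= k * (b - a) ->
  (forall z, Rmin a b <= z <= Rmax a b -> is_derive h z (dh z)) ->
  (forall z, Rmin a b <= z <= Rmax a b -> dh z <= B) ->
  k * (h b - h a) <= B * (k * (b - a)).
Proof.
  intros Hk Hd Hb. destruct (MVT_derive h dh a b Hd) as [c [Hc ->]].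
  specialize (Hb c Hc). nra.
Qed.

Lemma sub_le_of_derive_le (h dh : R -> R) a b K : a <= b ->
  (forall z, a <= z <= b -> is_derive h z (dh z)) ->
  (forall z, a <= z <= b -> dh z <= K) ->
  h b - h a <= K * (b - a).
Proof.
  intros Hab Hd Hb. rewrite <- (Rmult_1_l (h b - h a)), <- (Rmult_1_l (b - a)).
  apply (scaled_increment_le h dh); [lra| |];
    intros z Hz; rewrite Rmin_left, Rmax_right in Hz by lra; auto.
Qed.

Lemma sub_ge_of_derive_ge (h dh : R -> R) a b K : a <= b ->
  (forall z, a <= z <= b -> is_derive h z (dh z)) ->
  (forall z, a <= z <= b -> K <= dh z) ->
  K * (b - a) <= h b - h a.
Proof.
  intros Hab Hd Hb.
  enough (- h b - - h a <= - K * (b - a)) by lra.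
  apply (sub_le_of_derive_le (fun x => - h x) (fun x => - dh x)); [lra| |].
  - intros z Hz. exact (is_derive_opp h z (dh z) (Hd z Hz)).
  - intros z Hz. specialize (Hb z Hz). lra.
Qed.

Lemma lipschitz_on_segment_of_C1 (h : R -> R) :
  (forall x, is_derive h x (Derive h x)) ->
  (forall x, continuity_pt (Derive h) x) ->
  forall A B, exists M, 0 <= M /\ forall x y, A <= x <= B -> A <= y <= B ->
    Rabs (h y - h x) <= M * Rabs (y - x).
Proof.
  intros Hd Hc A B.
  destruct (Rle_dec A B) as [HAB|HAB]; [|exists 0; split; [lra | intros; lra]].
  destruct (continuity_ab_maj (fun z => Rabs (Derive h z)) A B HAB) as [m [Hm _]].
  { intros z _. apply (continuity_pt_comp (Derive h) Rabs); [apply Hc | apply Rcontinuity_abs]. }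
  exists (Rabs (Derive h m)). split; [apply Rabs_pos|].
  intros x y Hx Hy. apply (Rabs_sub_le_of_derive_bound h (Derive h)); [intros; apply Hd|].
  intros z Hz. apply Hm. split.
  - apply Rle_trans with (Rmin x y); [apply Rmin_glb|]; lra.
  - apply Rle_trans with (Rmax x y); [|apply Rmax_lub]; lra.
Qed.

Lemma periodic1_nat (h : R -> R) : periodic1 h -> forall n x, h (x + INR n) = h x.
Proof.
  intros Hp n. induction n as [|n IH]; intro x.
  - simpl. now rewrite Rplus_0_r.
  - rewrite S_INR, <- Rplus_assoc, Hp. apply IH.
Qed.

Lemma periodic1_Z (h : R -> R) : periodic1 h -> forall k x, h (x + IZR k) = h x.
Proof.
  intros Hp [|p|p] x.
  - now rewrite Rplus_0_r.
  - rewrite <- positive_nat_Z, <- INR_IZR_INZ. apply periodic1_nat, Hp.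
  - replace (x + IZR (Z.neg p)) with (x - INR (Pos.to_nat p))
      by (rewrite INR_IZR_INZ, positive_nat_Z, <- Pos2Z.opp_pos, opp_IZR; ring).
    rewrite <- (periodic1_nat h Hp (Pos.to_nat p) (x - INR (Pos.to_nat p))).
    f_equal. ring.
Qed.

Lemma periodic1_representative (h : R -> R) : periodic1 h ->
  forall t x, exists y, t <= y <= t + 1 /\ h x = h y.
Proof.
  intros Hp t x. destruct (base_Int_part (x - t)) as [H1 H2].
  exists (x - IZR (Int_part (x - t))). split; [lra|].
  rewrite <- (periodic1_Z h Hp (Int_part (x - t)) (x - IZR (Int_part (x - t)))). f_equal. ring.
Qed.

Lemma periodic1_global_min (h : R -> R) : periodic1 h -> (forall x, continuity_pt h x) ->
  exists xm, forall y, h xm <= h y.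
Proof.
  intros Hp Hc. destruct (continuity_ab_min h 0 1) as [xm [Hm _]]; [lra | intros; apply Hc|].
  exists xm. intro y. destruct (periodic1_representative h Hp 0 y) as [y' [Hy ->]].
  apply Hm. lra.
Qed.

Lemma periodic1_global_max (h : R -> R) : periodic1 h -> (forall x, continuity_pt h x) ->
  exists xM, forall y, h y <= h xM.
Proof.
  intros Hp Hc. destruct (periodic1_global_min (fun x => - h x)) as [xM HM].
  - intro x. unfold periodic1 in Hp. now rewrite Hp.
  - intro x. now apply continuity_pt_opp.
  - exists xM. intro y. specialize (HM y). lra.
Qed.

Lemma derive_eq_0_at_global_min (h : R -> R) c l :
  is_derive h c l -> (forall x, h c <= h x) -> l = 0.
Proof.
  intros Hd Hm. apply is_derive_Reals in Hd.
  rewrite <- (deriv_minimum h (c - 1) (c + 1) c (exist _ l Hd)); try lra.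
  - symmetry. now apply derive_pt_eq_0.
  - intros; apply Hm.
Qed.

Lemma derive_eq_0_at_global_max (h : R -> R) c l :
  is_derive h c l -> (forall x, h x <= h c) -> l = 0.
Proof.
  intros Hd Hm.
  enough (- l = 0) by lra.
  apply (derive_eq_0_at_global_min (fun x => - h x) c); [exact (is_derive_opp h c l Hd)|].
  intro x. specialize (Hm x). lra.
Qed.

Lemma continuity_pt_eps (h : R -> R) x : continuity_pt h x -> forall eps, 0 < eps ->
  exists d, 0 < d /\ forall y, Rabs (y - x) < d -> Rabs (h y - h x) < eps.
Proof.
  intros Hc eps He. destruct (Hc eps He) as [d [Hd H]].
  exists d. split; [lra|]. intros y Hy.
  destruct (Req_dec y x) as [->|Hne].
  - rewrite Rminus_eq_0, Rabs_R0. lra.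
  - apply (H y). repeat split; auto.
Qed.

Lemma first_zero (h : R -> R) x0 x2 : (forall x, continuity_pt h x) ->
  x0 < x2 -> 0 < h x0 -> h x2 <= 0 ->
  exists s, x0 < s <= x2 /\ h s = 0 /\ forall x, x0 <= x < s -> 0 < h x.
Proof.
  intros Hc Hlt H0 H2.
  set (E := fun x => x0 <= x <= x2 /\ forall y, x0 <= y <= x -> 0 < h y).
  assert (E0 : E x0) by (split; [lra | intros y Hy; replace y with x0 by lra; exact H0]).
  destruct (completeness E) as [s [Hub Hlub]].
  { exists x2. intros x [Hx _]. lra. }
  { now exists x0. }
  assert (Hs0 : x0 <= s) by now apply Hub.
  assert (Hs2 : s <= x2) by (apply Hlub; intros x [Hx _]; lra).
  assert (Hbelow : forall x, x0 <= x < s -> 0 < h x).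
  { intros x Hx. apply NNPP. intro Hnx.
    enough (s <= x) by lra.
    apply Hlub. intros z [Hz Hzy]. apply Rnot_lt_le. intro Hxz. apply Hnx, Hzy. lra. }
  assert (Hhs : h s = 0).
  { destruct (Rtotal_order (h s) 0) as [Hneg|[Hz|Hpos]]; [exfalso | exact Hz | exfalso].
    - destruct (continuity_pt_eps h s (Hc s) (- h s)) as [d [Hd Hnear]]; [lra|].
      assert (x0 < s) by (destruct Hs0 as [| <-]; lra).
      set (x := Rmax x0 (s - d / 2)).
      assert (x0 <= x /\ s - d / 2 <= x) as [Hx1 Hx2] by (split; [apply Rmax_l | apply Rmax_r]).
      assert (x < s) by (apply Rmax_lub_lt; lra).
      specialize (Hnear x). apply Rabs_def2 in Hnear; [|apply Rabs_def1; lra].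
      specialize (Hbelow x). lra.
    - destruct (continuity_pt_eps h s (Hc s) (h s)) as [d [Hd Hnear]]; [lra|].
      assert (s < x2) by (destruct Hs2 as [| ->]; lra).
      set (x := Rmin x2 (s + d / 2)).
      assert (x <= x2 /\ x <= s + d / 2) as [Hx1 Hx2] by (split; [apply Rmin_l | apply Rmin_r]).
      assert (s < x) by (apply Rmin_glb_lt; lra).
      enough (E x) by (specialize (Hub x H3); lra).
      split; [lra|]. intros y Hy.
      destruct (Rlt_le_dec y s); [apply Hbelow; lra|].
      specialize (Hnear y). apply Rabs_def2 in Hnear; [lra | apply Rabs_def1; lra]. }
  exists s. repeat split; auto.
  destruct Hs0 as [| <-]; lra.
Qed.

Lemma derive_nonpos_at_first_zero (h : R -> R) s l x0 :
  is_derive h s l -> h s = 0 -> x0 < s -> (forall x, x0 <= x < s -> 0 < h x) -> l <= 0.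
Proof.
  intros Hd Hs Hx0 Hpos. apply is_derive_Reals in Hd.
  apply Rnot_lt_le. intro Hl.
  destruct (Hd l Hl) as [[del Hdel0] Hdel]. simpl in Hdel.
  set (u := - Rmin (del / 2) (s - x0)).
  assert (Rmin (del / 2) (s - x0) <= del / 2 /\ Rmin (del / 2) (s - x0) <= s - x0) as [Hm1 Hm2]
    by (split; [apply Rmin_l | apply Rmin_r]).
  assert (0 < Rmin (del / 2) (s - x0)) by (apply Rmin_glb_lt; lra).
  specialize (Hdel u). rewrite Hs, Rminus_0_r in Hdel.
  apply Rabs_def2 in Hdel; [|unfold u; lra | rewrite Rabs_left; unfold u; lra].
  assert (0 < h (s + u)) by (apply Hpos; unfold u; lra).
  assert (/ u < 0) by (apply Rinv_lt_0_compat; unfold u; lra).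
  unfold Rdiv in Hdel. nra.
Qed.

Lemma first_zero_derive_nonpos (h dh : R -> R) x0 x2 :
  (forall x, is_derive h x (dh x)) -> x0 < x2 -> 0 < h x0 -> h x2 <= 0 ->
  exists s, h s = 0 /\ dh s <= 0.
Proof.
  intros Hd Hlt H0 H2.
  destruct (first_zero h x0 x2) as [s [Hs [Hhs Hpos]]]; auto.
  { intro x. exact (continuity_pt_of_is_derive _ _ _ (Hd x)). }
  exists s. split; [assumption|].
  apply (derive_nonpos_at_first_zero h s (dh s) x0); auto; lra.
Qed.

Lemma last_zero_derive_nonneg (h dh : R -> R) x2 x0 :
  (forall x, is_derive h x (dh x)) -> x2 < x0 -> 0 < h x0 -> h x2 <= 0 ->
  exists s, h s = 0 /\ 0 <= dh s.
Proof.
  intros Hd Hlt H0 H2.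
  destruct (first_zero_derive_nonpos (fun x => h (- x)) (fun x => - dh (- x)) (- x0) (- x2))
    as [s [Hs Hds]].
  - intro x. replace (- dh (- x)) with (scal (-1) (dh (- x)))
      by (unfold scal; simpl; unfold mult; simpl; ring).
    apply (is_derive_comp h Ropp x); [apply Hd | auto_derive; [exact I | ring]].
  - lra.
  - now rewrite Ropp_involutive.
  - now rewrite Ropp_involutive.
  - exists (- s). split; [assumption | lra].
Qed.

(* exp (-2 B t) * e t ^ 2 is nonincreasing and vanishes at a. *)
Lemma gronwall_zero (e q : R -> R) a b B :
  (forall x, a <= x <= b -> is_derive e x (- q x)) ->
  (forall x, a <= x <= b -> Rabs (q x) <= B * Rabs (e x)) ->
  e a = 0 -> forall x, a <= x <= b -> e x = 0.
Proof.
  intros Hd Hb Ha x Hx.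
  set (phi := fun t => exp (-2 * B * t) * (e t * e t)).
  set (dphi := fun t => exp (-2 * B * t) * (-2 * B * (e t * e t) - 2 * (e t * q t))).
  assert (Hphi : phi x - phi a <= 0 * (x - a)).
  { apply (sub_le_of_derive_le phi dphi); [lra| |].
    - intros t Ht. unfold phi, dphi. specialize (Hd t ltac:(lra)).
      auto_derive.
      + repeat split; exists (- q t); exact Hd.
      + replace (Derive (fun x0 => e x0) t) with (- q t)
          by (symmetry; now apply is_derive_unique).
        ring.
    - intros t Ht. specialize (Hb t ltac:(lra)).
      assert (Rabs (e t * q t) <= B * (e t * e t)).
      { assert (Hsq : e t * e t = Rabs (e t) * Rabs (e t))
          by (rewrite <- Rabs_mult; symmetry; apply Rabs_right; nra).
        rewrite Rabs_mult, Hsq. pose proof (Rabs_pos (e t)). nra. }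
      pose proof (Rle_abs (- (e t * q t))) as Hab. rewrite Rabs_Ropp in Hab.
      pose proof (exp_pos (-2 * B * t)). unfold dphi. nra. }
  unfold phi in Hphi. rewrite Ha in Hphi.
  pose proof (exp_pos (-2 * B * x)).
  assert (Hsq : e x * e x = 0) by nra.
  now destruct (Rmult_integral _ _ Hsq).
Qed.

Lemma RInt_le_const (h : R -> R) a b K : a <= b -> (forall x, a <= x <= b -> continuous h x) ->
  (forall x, a <= x <= b -> h x <= K) -> RInt h a b <= K * (b - a).
Proof.
  intros Hab Hc Hb.
  apply Rle_trans with (RInt (fun _ => K) a b).
  - apply RInt_le; auto.
    + apply (ex_RInt_continuous (V := R_CompleteNormedModule)). intros z Hz. apply Hc.
      rewrite Rmin_left, Rmax_right in Hz; lra.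
    + apply (ex_RInt_const (V := R_CompleteNormedModule)).
    + intros; apply Hb; lra.
  - rewrite RInt_const. unfold scal; simpl; unfold mult; simpl. lra.
Qed.

Lemma RInt_ge_const (h : R -> R) a b K : a <= b -> (forall x, a <= x <= b -> continuous h x) ->
  (forall x, a <= x <= b -> K <= h x) -> K * (b - a) <= RInt h a b.
Proof.
  intros Hab Hc Hb.
  apply Rle_trans with (RInt (fun _ => K) a b).
  - rewrite RInt_const. unfold scal; simpl; unfold mult; simpl. lra.
  - apply RInt_le; auto.
    + apply (ex_RInt_const (V := R_CompleteNormedModule)).
    + apply (ex_RInt_continuous (V := R_CompleteNormedModule)). intros z Hz. apply Hc.
      rewrite Rmin_left, Rmax_right in Hz; lra.
    + intros; apply Hb; lra.
Qed.

Lemma RInt_le_piecewise4 (w : R -> R) a1 a2 a3 b1 b2 b3 b4 :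
  0 <= a1 -> a1 <= a2 -> a2 <= a3 -> a3 <= 1 -> (forall x, continuous w x) ->
  (forall x, 0 <= x <= a1 -> w x <= b1) -> (forall x, a1 <= x <= a2 -> w x <= b2) ->
  (forall x, a2 <= x <= a3 -> w x <= b3) -> (forall x, a3 <= x <= 1 -> w x <= b4) ->
  RInt w 0 1 <= b1 * a1 + b2 * (a2 - a1) + b3 * (a3 - a2) + b4 * (1 - a3).
Proof.
  intros H1 H2 H3 H4 Hc B1 B2 B3 B4.
  assert (Ex : forall a b, ex_RInt w a b).
  { intros a b. apply (ex_RInt_continuous (V := R_CompleteNormedModule)). intros; apply Hc. }
  rewrite <- (RInt_Chasles w 0 a1 1), <- (RInt_Chasles w a1 a2 1), <- (RInt_Chasles w a2 a3 1)
    by auto.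
  unfold plus; simpl.
  pose proof (RInt_le_const w 0 a1 b1 H1 (fun x _ => Hc x) B1).
  pose proof (RInt_le_const w a1 a2 b2 H2 (fun x _ => Hc x) B2).
  pose proof (RInt_le_const w a2 a3 b3 H3 (fun x _ => Hc x) B3).
  pose proof (RInt_le_const w a3 1 b4 H4 (fun x _ => Hc x) B4).
  lra.
Qed.

(* At a zero of e, q vanishes too: a zero entered from above forces a <= 0 and a zero left
   upwards forces a >= 0, so a = 0 and Gronwall makes e vanish on a whole period. *)
Lemma periodic_solution_pos (e q : R -> R) a : periodic1 e ->
  (forall x, is_derive e x (a - q x)) ->
  (forall x1 x2, exists B, forall x, x1 <= x <= x2 -> Rabs (q x) <= B * Rabs (e x)) ->
  0 < RInt e 0 1 -> forall x, 0 < e x.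
Proof.
  intros Hp Hd Hq Hint x.
  assert (He : forall y, continuity_pt e y)
    by (intro y; exact (continuity_pt_of_is_derive _ _ _ (Hd y))).
  destruct (periodic1_global_max e Hp He) as [xM HM].
  assert (HMpos : 0 < e xM).
  { apply Rnot_le_lt. intro Hle.
    enough (RInt e 0 1 <= e xM * (1 - 0)) by lra.
    apply RInt_le_const; [lra | intros y _ | intros; apply HM].
    exact (continuous_of_is_derive _ _ _ (Hd y)). }
  assert (Hq0 : forall y, e y = 0 -> q y = 0).
  { intros y Hy. destruct (Hq y y) as [B HB].
    specialize (HB y (conj (Rle_refl y) (Rle_refl y))).
    rewrite Hy, Rabs_R0, Rmult_0_r in HB. apply Rabs_eq_0. pose proof (Rabs_pos (q y)). lra. }
  apply Rnot_le_lt. intro Hx.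
  destruct (periodic1_representative e Hp (x - 2) xM) as [y1 [Hy1 Ey1]].
  destruct (first_zero_derive_nonpos e (fun t => a - q t) y1 x) as [s1 [Hs1 Hds1]];
    [exact Hd | lra | now rewrite <- Ey1 | exact Hx |].
  destruct (periodic1_representative e Hp (x + 1) xM) as [y2 [Hy2 Ey2]].
  destruct (last_zero_derive_nonneg e (fun t => a - q t) x y2) as [s2 [Hs2 Hds2]];
    [exact Hd | lra | now rewrite <- Ey2 | exact Hx |].
  rewrite (Hq0 s1 Hs1) in Hds1. rewrite (Hq0 s2 Hs2) in Hds2.
  assert (Ha : a = 0) by lra. subst a.
  destruct (Hq s1 (s1 + 1)) as [B HB].
  assert (Hzero : forall t, s1 <= t <= s1 + 1 -> e t = 0).
  { apply (gronwall_zero e q s1 (s1 + 1) B); auto.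
    intros t _. rewrite <- (Rminus_0_l (q t)). apply Hd. }
  destruct (periodic1_representative e Hp s1 xM) as [z [Hz Ez]].
  rewrite Ez, Hzero in HMpos by exact Hz. lra.
Qed.

Lemma is_derive_ln_comp (e : R -> R) t d : is_derive e t d -> 0 < e t ->
  is_derive (fun t => ln (e t)) t (d / e t).
Proof.
  intros Hd Hp. auto_derive.
  - repeat split; auto. now exists d.
  - replace (Derive (fun x => e x) t) with d by (symmetry; now apply is_derive_unique). field. lra.
Qed.

Lemma exp_le (x y : R) : x <= y -> exp x <= exp y.
Proof. intros [H| ->]; [left; now apply exp_increasing | apply Rle_refl]. Qed.

(* At a minimum point xm of e, a = q xm, so |(ln e)'| = |q xm - q| / e <= 2 M. *)
Lemma periodic_solution_harnack (e q : R -> R) a M : (forall x, 0 < e x) -> periodic1 e ->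
  (forall x, is_derive e x (a - q x)) -> (forall x, Rabs (q x) <= M * e x) ->
  forall x, e x <= exp (2 * M) * RInt e 0 1.
Proof.
  intros Hpos Hp Hd Hq x.
  destruct (periodic1_global_min e Hp) as [xm Hm].
  { intro y. exact (continuity_pt_of_is_derive _ _ _ (Hd y)). }
  assert (Ha : a - q xm = 0) by (apply (derive_eq_0_at_global_min e xm); auto).
  assert (Hmean : e xm * (1 - 0) <= RInt e 0 1).
  { apply RInt_ge_const; [lra | intros y _ | intros; apply Hm].
    exact (continuous_of_is_derive _ _ _ (Hd y)). }
  assert (HM : 0 <= M).
  { specialize (Hq xm). pose proof (Rabs_pos (q xm)). pose proof (Hpos xm). nra. }
  destruct (periodic1_representative e Hp xm x) as [y [Hy ->]].
  assert (Hln : Rabs (ln (e y) - ln (e xm)) <= 2 * M * Rabs (y - xm)).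
  { apply (Rabs_sub_le_of_derive_bound (fun t => ln (e t)) (fun t => (a - q t) / e t)).
    - intros z _. now apply is_derive_ln_comp.
    - intros z _. pose proof (Hpos z).
      unfold Rdiv. rewrite Rabs_mult, Rabs_inv, (Rabs_right (e z)) by lra.
      apply Rmult_le_reg_r with (e z); [assumption|].
      rewrite Rmult_assoc, Rinv_l, Rmult_1_r by lra.
      replace (a - q z) with (q xm - q z) by lra.
      eapply Rle_trans; [apply Rabs_triang|]. rewrite Rabs_Ropp.
      pose proof (Hq xm). pose proof (Hq z). specialize (Hm z). nra. }
  rewrite (Rabs_right (y - xm)) in Hln by lra. apply Rabs_le_between in Hln.
  rewrite <- (exp_ln (e y)) by auto.
  apply Rle_trans with (exp (ln (e xm) + 2 * M)); [apply exp_le; nra|].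
  rewrite exp_plus, exp_ln by auto. pose proof (exp_pos (2 * M)). nra.
Qed.

Lemma Rabs_sub_le_of_one_sided_derive (k dk : R -> R) d :
  (forall x, is_derive k x (dk x)) -> k 1 = k 0 ->
  (forall x, 0 <= x <= 1 -> - d <= dk x) \/ (forall x, 0 <= x <= 1 -> dk x <= d) ->
  forall x, 0 <= x <= 1 -> Rabs (k x - k 0) <= d.
Proof.
  intros Hd Hk [Hlow|Hup] x Hx.
  - pose proof (sub_ge_of_derive_ge k dk 0 x (- d)
      ltac:(lra) (fun z _ => Hd z) (fun z Hz => Hlow z ltac:(lra))).
    pose proof (sub_ge_of_derive_ge k dk x 1 (- d)
      ltac:(lra) (fun z _ => Hd z) (fun z Hz => Hlow z ltac:(lra))).
    apply Rabs_le. nra.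
  - pose proof (sub_le_of_derive_le k dk 0 x d
      ltac:(lra) (fun z _ => Hd z) (fun z Hz => Hup z ltac:(lra))).
    pose proof (sub_le_of_derive_le k dk x 1 d
      ltac:(lra) (fun z _ => Hd z) (fun z Hz => Hup z ltac:(lra))).
    apply Rabs_le. nra.
Qed.

(* k = ln e + int_0^x Fd has k 1 = k 0 and k' = a / e - (q / e - Fd),
   whose first term has the constant sign of a. *)
Lemma ln_oscillation_le (e q Fd : R -> R) a K d :
  (forall x, 0 < e x) -> e 1 = e 0 -> (forall x, is_derive e x (a - q x)) ->
  (forall x, continuous Fd x) -> RInt Fd 0 1 = 0 ->
  (forall x, 0 <= x <= 1 -> Rabs (Fd x) <= K) ->
  (forall x, 0 <= x <= 1 -> Rabs (q x / e x - Fd x) <= d) ->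
  forall x, 0 <= x <= 1 -> Rabs (ln (e x) - ln (e 0)) <= K + d.
Proof.
  intros Hpos Hper Hd HFd HF1 HK Hq x Hx.
  set (F := fun x => RInt Fd 0 x).
  assert (HF : forall x, is_derive F x (Fd x)).
  { intro y. apply (is_derive_RInt (V := R_CompleteNormedModule) Fd F 0 y); [|auto].
    apply filter_forall. intro z. apply (RInt_correct (V := R_CompleteNormedModule)).
    apply (ex_RInt_continuous (V := R_CompleteNormedModule)). intros; auto. }
  assert (HF0 : F 0 = 0) by apply (RInt_point (V := R_CompleteNormedModule)).
  set (k := fun t => ln (e t) + F t).
  set (dk := fun t => a / e t - (q t / e t - Fd t)).
  assert (Hkx : Rabs (k x - k 0) <= d).
  { apply (Rabs_sub_le_of_one_sided_derive k dk); auto.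
    - intro t. replace (dk t) with ((a - q t) / e t + Fd t)
        by (unfold dk; field; apply Rgt_not_eq, Hpos).
      apply (is_derive_plus (fun t => ln (e t)) F); [now apply is_derive_ln_comp | apply HF].
    - unfold k. rewrite Hper, HF0. unfold F. rewrite HF1. reflexivity.
    - destruct (Rle_dec 0 a); [left | right]; intros t Ht;
        specialize (Hq t Ht); apply Rabs_le_between in Hq; unfold dk;
        pose proof (Rinv_0_lt_compat _ (Hpos t)); unfold Rdiv at 1; nra. }
  assert (HFx : Rabs (F x - F 0) <= K * Rabs (x - 0)).
  { apply (Rabs_sub_le_of_derive_bound F Fd); [intros; apply HF|].
    intros z Hz. apply HK. rewrite Rmin_left, Rmax_right in Hz; lra. }
  unfold k in Hkx. rewrite HF0 in Hkx, HFx. rewrite !Rminus_0_r, (Rabs_right x) in HFx by lra.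
  replace (ln (e x) - ln (e 0)) with ((ln (e x) + F x - (ln (e 0) + 0)) - F x) by ring.
  assert (HK0 : 0 <= K) by (pose proof (HK 0 ltac:(lra)); pose proof (Rabs_pos (Fd 0)); lra).
  eapply Rle_trans; [apply Rabs_triang|]. rewrite Rabs_Ropp. nra.
Qed.

Lemma exp_bounds_of_Rabs_ln_sub x y b : 0 < x -> 0 < y -> Rabs (ln x - ln y) <= b ->
  y * exp (- b) <= x <= y * exp b.
Proof.
  intros Hx Hy Hb. apply Rabs_le_between in Hb.
  rewrite <- (exp_ln x), <- (exp_ln y) by assumption. rewrite <- !exp_plus.
  split; apply exp_le; lra.
Qed.

Lemma difference_quotient_error (h : R -> R) A B M :
  (forall x, is_derive h x (Derive h x)) ->
  (forall x y, A <= x <= B -> A <= y <= B -> Rabs (Derive h y - Derive h x) <= M * Rabs (y - x)) ->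
  forall x y, A <= x <= B -> A <= y <= B -> y <> x ->
  Rabs ((h y - h x) / (y - x) - Derive h x) <= M * Rabs (y - x).
Proof.
  intros Hd HL x y Hx Hy Hxy.
  assert (Hyx : 0 < Rabs (y - x)) by (apply Rabs_pos_lt; lra).
  assert (HM : 0 <= M).
  { pose proof (HL x y Hx Hy). pose proof (Rabs_pos (Derive h y - Derive h x)). nra. }
  set (phi := fun z => h z - Derive h x * z).
  assert (Hphi : Rabs (phi y - phi x) <= M * Rabs (y - x) * Rabs (y - x)).
  { apply (Rabs_sub_le_of_derive_bound phi (fun z => Derive h z - Derive h x)).
    - intros z _. unfold phi. auto_derive; [exists (Derive h z); apply Hd|].
      change (Derive (fun x0 => h x0) z) with (Derive h z). ring.
    - intros z Hz. apply Rle_trans with (M * Rabs (z - x)).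
      + apply HL; [assumption|]. split.
        * apply Rle_trans with (Rmin x y); [apply Rmin_glb|]; lra.
        * apply Rle_trans with (Rmax x y); [|apply Rmax_lub]; lra.
      + apply Rmult_le_compat_l; [assumption|].
        apply Rabs_le_between_min_max. rewrite Rmin_comm, Rmax_comm. exact Hz. }
  replace ((h y - h x) / (y - x) - Derive h x) with ((phi y - phi x) / (y - x))
    by (unfold phi; field; lra).
  unfold Rdiv. rewrite Rabs_mult, Rabs_inv.
  apply Rmult_le_reg_r with (Rabs (y - x)); [assumption|].
  rewrite Rmult_assoc, Rinv_l, Rmult_1_r by lra. exact Hphi.
Qed.

Lemma coercive_sublevel_bounded (G : R -> R) : coercive G ->
  forall K, exists A B, forall x, G x <= K -> A <= x <= B.
Proof.
  intros [Hp Hm] K.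
  destruct (Hp (fun y => K < y)) as [B HB]; [now exists K|].
  destruct (Hm (fun y => K < y)) as [A HA]; [now exists K|].
  exists A, B. intros x Hx. split; apply Rnot_lt_le; intro Hlt.
  - specialize (HA x Hlt). lra.
  - specialize (HB x Hlt). lra.
Qed.

Lemma continuity_pt_neg_near_0 (P : R -> R) a : continuity_pt P 0 -> P 0 < 0 -> 0 < a ->
  exists t, 0 < t < a /\ P t < 0.
Proof.
  intros Hc HP Ha.
  destruct (continuity_pt_eps P 0 Hc (- P 0)) as [d [Hd Hnear]]; [lra|].
  set (t := Rmin (d / 2) (a / 2)).
  assert (t <= d / 2 /\ t <= a / 2) as [Ht1 Ht2] by (split; [apply Rmin_l | apply Rmin_r]).
  assert (0 < t) by (apply Rmin_glb_lt; lra).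
  exists t. split; [lra|].
  specialize (Hnear t). apply Rabs_def2 in Hnear; [lra|].
  rewrite Rminus_0_r, Rabs_right; lra.
Qed.

Lemma exists_pos_small (r t M : R) : 0 < r -> 0 < t -> 0 <= M ->
  exists d, 0 < d /\ d <= 1 /\ d <= r /\ M * d <= t.
Proof.
  intros Hr Ht HM.
  assert (Htm : 0 < t / (M + 1)) by (apply Rdiv_lt_0_compat; lra).
  assert (Htm1 : t / (M + 1) * (M + 1) = t) by (field; lra).
  exists (Rmin 1 (Rmin r (t / (M + 1)))).
  pose proof (Rmin_l r (t / (M + 1))). pose proof (Rmin_r r (t / (M + 1))).
  pose proof (Rmin_l 1 (Rmin r (t / (M + 1)))). pose proof (Rmin_r 1 (Rmin r (t / (M + 1)))).
  assert (0 < Rmin 1 (Rmin r (t / (M + 1)))) by (repeat apply Rmin_glb_lt; lra).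
  repeat split; nra.
Qed.

Lemma upper_bound_near_segment (h : R -> R) a b K t : a <= b -> 0 < t ->
  continuity_pt h a -> continuity_pt h b -> (forall x, a <= x <= b -> h x <= K) ->
  exists r, 0 < r /\ (forall x, Rabs (x - a) < r -> h x < h a + t) /\
    (forall x, Rabs (x - b) < r -> h x < h b + t) /\ (forall x, a - r < x < b + r -> h x < K + t).
Proof.
  intros Hab Ht Hca Hcb HK.
  destruct (continuity_pt_eps h a Hca t Ht) as [ra [Hra Ha]].
  destruct (continuity_pt_eps h b Hcb t Ht) as [rb [Hrb Hb]].
  exists (Rmin ra rb).
  assert (Rmin ra rb <= ra /\ Rmin ra rb <= rb) as [Hr1 Hr2]
    by (split; [apply Rmin_l | apply Rmin_r]).
  assert (Hnear_a : forall x, Rabs (x - a) < Rmin ra rb -> h x < h a + t).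
  { intros x Hx. specialize (Ha x ltac:(lra)). apply Rabs_def2 in Ha. lra. }
  assert (Hnear_b : forall x, Rabs (x - b) < Rmin ra rb -> h x < h b + t).
  { intros x Hx. specialize (Hb x ltac:(lra)). apply Rabs_def2 in Hb. lra. }
  repeat split; auto; [apply Rmin_glb_lt; assumption|].
  intros x Hx. destruct (Rlt_le_dec x a) as [Hxa|Hxa].
  - specialize (HK a ltac:(lra)). enough (h x < h a + t) by lra.
    apply Hnear_a. rewrite Rabs_left; lra.
  - destruct (Rle_lt_dec x b) as [Hxb|Hxb].
    + specialize (HK x ltac:(lra)). lra.
    + specialize (HK b ltac:(lra)). enough (h x < h b + t) by lra.
      apply Hnear_b. rewrite Rabs_right; lra.
Qed.

Lemma continuous_of_C1 (h : R -> R) : is_C1 h -> forall x, continuous h x.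
Proof.
  intros [Hd _] x. apply (ex_derive_continuous (K := R_AbsRing) (V := R_NormedModule)), Hd.
Qed.

Lemma RInt_scal_minus (u v : R -> R) k a b :
  (forall x, continuous u x) -> (forall x, continuous v x) ->
  RInt (fun x => k * (u x - v x)) a b = k * (RInt u a b - RInt v a b).
Proof.
  intros Hu Hv. apply is_RInt_unique.
  apply (is_RInt_scal (fun x => u x - v x)), (is_RInt_minus u v);
    apply (RInt_correct (V := R_CompleteNormedModule)),
      (ex_RInt_continuous (V := R_CompleteNormedModule)); auto.
Qed.

Lemma Rabs_mult_sign s y : s * s = 1 -> Rabs (s * y) = Rabs y.
Proof.
  intro Hs. rewrite Rabs_mult.
  assert (Habs : Rabs s * Rabs s = 1) by (rewrite <- Rabs_mult, Hs; apply Rabs_R1).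
  pose proof (Rabs_pos s).
  replace (Rabs s) with 1 by nra. ring.
Qed.

Definition gap (s : R) (g f : R -> R) (x : R) : R := s * (g x - f x).

Section CellGap.

Variables (G f : R -> R) (p1 p2 : R).
Hypothesis G_derive : forall x, is_derive G x (Derive G x).
Hypothesis DG_derive : forall x, is_derive (Derive G) x (Derive (Derive G) x).
Hypothesis f_C1 : is_C1 f.
Hypothesis f_periodic : periodic1 f.
Hypothesis f_range : forall x, p1 <= f x <= p2.
Hypothesis D2G_continuous : forall x, continuity_pt (Derive (Derive G)) x.

Let G_continuous x : continuous G x := continuous_of_is_derive _ _ _ (G_derive x).
Let DG_continuous x : continuous (Derive G) x := continuous_of_is_derive _ _ _ (DG_derive x).
Let DG_continuity_pt x : continuity_pt (Derive G) x :=
  continuity_pt_of_is_derive _ _ _ (DG_derive x).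

Lemma DG_comp_continuous (u : R -> R) : is_C1 u -> forall x, continuous (fun x => Derive G (u x)) x.
Proof. intros Hu x. apply continuous_comp; [now apply continuous_of_C1 | apply DG_continuous]. Qed.

Section Solution.

Variables (s c h : R) (g : R -> R).
Hypothesis s_sign : s * s = 1.
Hypothesis g_C1 : is_C1 g.
Hypothesis g_periodic : periodic1 g.
Hypothesis g_cell : forall x, Derive g x + G (g x) + Vpot G f x = h.
Hypothesis g_mean : RInt g 0 1 = RInt f 0 1 + s * c.
Hypothesis c_pos : 0 < c.

Local Notation e := (gap s g f).
Local Notation q := (gap s (fun x => G (g x)) (fun x => G (f x))).

Lemma gap_derive x : is_derive e x (s * h - q x).
Proof.
  destruct g_C1 as [Hg _], f_C1 as [Hf _].
  specialize (g_cell x). unfold Vpot in g_cell.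
  unfold gap. auto_derive; [repeat split; auto|].
  change (Derive (fun x => g x) x) with (Derive g x).
  change (Derive (fun x => f x) x) with (Derive f x).
  replace (Derive g x) with (h - G (g x) + Derive f x + G (f x)) by lra. ring.
Qed.

Lemma gap_periodic : periodic1 e.
Proof. intro x. unfold gap. now rewrite g_periodic, f_periodic. Qed.

Lemma gap_continuity_pt x : continuity_pt e x.
Proof. exact (continuity_pt_of_is_derive _ _ _ (gap_derive x)). Qed.

Lemma gap_mean : RInt e 0 1 = c.
Proof.
  unfold gap. rewrite RInt_scal_minus, g_mean by (apply continuous_of_C1; assumption).
  replace (RInt f 0 1 + s * c - RInt f 0 1) with (s * c) by ring.
  rewrite <- Rmult_assoc, s_sign. apply Rmult_1_l.
Qed.

Lemma gap_locally_lipschitz x1 x2 :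
  exists B, forall x, x1 <= x <= x2 -> Rabs (q x) <= B * Rabs (e x).
Proof.
  destruct (Rle_dec x1 x2) as [H12|H12]; [|exists 0; intros; lra].
  assert (Hg : forall x, continuity_pt g x).
  { intro x. apply continuity_pt_filterlim. now apply continuous_of_C1. }
  destruct (continuity_ab_maj g x1 x2 H12) as [xa [Hxa _]]; [intros; apply Hg|].
  destruct (continuity_ab_min g x1 x2 H12) as [xb [Hxb _]]; [intros; apply Hg|].
  destruct (lipschitz_on_segment_of_C1 G G_derive DG_continuity_pt
    (Rmin p1 (g xb)) (Rmax p2 (g xa))) as [B [_ HB]].
  exists B. intros x Hx. unfold gap. rewrite !Rabs_mult_sign by exact s_sign.
  specialize (f_range x). specialize (Hxa x Hx). specialize (Hxb x Hx).
  assert (Rmin p1 (g xb) <= p1 /\ Rmin p1 (g xb) <= g xb) by (split; [apply Rmin_l | apply Rmin_r]).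
  assert (p2 <= Rmax p2 (g xa) /\ g xa <= Rmax p2 (g xa)) by (split; [apply Rmax_l | apply Rmax_r]).
  apply HB; lra.
Qed.

Lemma gap_pos x : 0 < e x.
Proof.
  apply (periodic_solution_pos e q (s * h) gap_periodic gap_derive gap_locally_lipschitz).
  rewrite gap_mean. exact c_pos.
Qed.

Lemma Rabs_sub_gap x : Rabs (g x - f x) = e x.
Proof.
  rewrite <- (Rabs_mult_sign s) by exact s_sign.
  apply Rabs_right, Rle_ge, Rlt_le, gap_pos.
Qed.

Lemma gap_rate_bound M1 : 0 <= M1 ->
  (forall x y, p1 - 1 <= x <= p2 + 1 -> p1 - 1 <= y <= p2 + 1 ->
    Rabs (G y - G x) <= M1 * Rabs (y - x)) ->
  c < 1 -> Rabs (s * h) <= M1.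
Proof.
  intros HM1 HL Hc1.
  destruct (periodic1_global_min e gap_periodic gap_continuity_pt) as [xm Hm].
  assert (Hrate : s * h - q xm = 0) by exact (derive_eq_0_at_global_min e xm _ (gap_derive xm) Hm).
  assert (Hmean : e xm * (1 - 0) <= RInt e 0 1).
  { apply RInt_ge_const; [lra | intros y _ | intros; apply Hm].
    exact (continuous_of_is_derive _ _ _ (gap_derive y)). }
  rewrite gap_mean in Hmean.
  replace (s * h) with (q xm) by lra. unfold gap. rewrite Rabs_mult_sign by exact s_sign.
  pose proof (Rabs_sub_gap xm) as Habs. pose proof (f_range xm).
  assert (Hclose : Rabs (g xm - f xm) <= 1) by lra. apply Rabs_le_between in Hclose.
  eapply Rle_trans; [apply HL; lra|]. rewrite Habs. nra.
Qed.

Lemma gap_le_of_sublevel Gmax M1 A B :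
  (forall p, p1 <= p <= p2 -> G p <= Gmax) -> (forall x, G x <= Gmax + M1 -> A <= x <= B) ->
  Rabs (s * h) <= M1 -> forall x, e x <= Rmax (B - p1) (p2 - A).
Proof.
  intros HGmax Hsub Hrate x.
  destruct (periodic1_global_max e gap_periodic gap_continuity_pt) as [xM HM].
  assert (HrateM : s * h - q xM = 0)
    by exact (derive_eq_0_at_global_max e xM _ (gap_derive xM) HM).
  assert (HgM : A <= g xM <= B).
  { apply Hsub.
    replace (G (g xM)) with (G (f xM) + s * q xM)
      by (unfold gap; rewrite <- Rmult_assoc, s_sign; ring).
    replace (q xM) with (s * h) by lra.
    pose proof (HGmax (f xM) (f_range xM)). pose proof (Rle_abs (s * (s * h))) as Hle_abs.
    rewrite Rabs_mult_sign in Hle_abs by exact s_sign. lra. }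
  apply Rle_trans with (e xM); [apply HM|].
  rewrite <- Rabs_sub_gap. apply Rabs_le_between.
  pose proof (f_range xM).
  pose proof (Rmax_l (B - p1) (p2 - A)). pose proof (Rmax_r (B - p1) (p2 - A)).
  lra.
Qed.

Lemma gap_harnack M R0 :
  (forall x y, p1 - R0 <= x <= p2 + R0 -> p1 - R0 <= y <= p2 + R0 ->
    Rabs (G y - G x) <= M * Rabs (y - x)) ->
  (forall x, e x <= R0) -> forall x, e x <= exp (2 * M) * c.
Proof.
  intros HL HR0 x. rewrite <- gap_mean.
  apply (periodic_solution_harnack e q (s * h) M gap_pos gap_periodic gap_derive).
  intro y. unfold gap at 1. rewrite Rabs_mult_sign, <- Rabs_sub_gap by exact s_sign.
  pose proof (HR0 y). pose proof (f_range y).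
  assert (Hclose : Rabs (g y - f y) <= R0) by (rewrite Rabs_sub_gap; lra).
  apply Rabs_le_between in Hclose. apply HL; lra.
Qed.

Lemma gap_quotient_error M2 :
  (forall x y, p1 - 1 <= x <= p2 + 1 -> p1 - 1 <= y <= p2 + 1 ->
    Rabs (Derive G y - Derive G x) <= M2 * Rabs (y - x)) ->
  (forall x, e x <= 1) -> forall x, Rabs (q x / e x - Derive G (f x)) <= M2 * e x.
Proof.
  intros HL He1 x.
  pose proof (gap_pos x) as Hpos. pose proof (Rabs_sub_gap x) as Habs.
  assert (Hne : g x - f x <> 0) by (intro Heq; rewrite Heq, Rabs_R0 in Habs; lra).
  assert (Hs : s <> 0) by (intro Hs0; rewrite Hs0 in s_sign; lra).
  replace (q x / e x) with ((G (g x) - G (f x)) / (g x - f x)) by (unfold gap; field; auto).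
  rewrite <- Habs.
  pose proof (f_range x). pose proof (He1 x).
  assert (Hclose : Rabs (g x - f x) <= 1) by lra. apply Rabs_le_between in Hclose.
  apply (difference_quotient_error G (p1 - 1) (p2 + 1)); auto; lra.
Qed.

Lemma gap_oscillation K1 M2 delta t :
  (forall p, p1 <= p <= p2 -> Rabs (Derive G p) <= K1) ->
  RInt (fun x => Derive G (f x)) 0 1 = 0 -> 0 <= M2 ->
  (forall x y, p1 - 1 <= x <= p2 + 1 -> p1 - 1 <= y <= p2 + 1 ->
    Rabs (Derive G y - Derive G x) <= M2 * Rabs (y - x)) ->
  (forall x, e x <= delta) -> delta <= 1 -> M2 * delta <= t ->
  forall x, 0 <= x <= 1 -> e 0 * exp (- (K1 + t)) <= e x <= e 0 * exp (K1 + t).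
Proof.
  intros HK1 HI HM2 HL Hdelta Hdelta1 Ht x Hx.
  assert (Hper : e 1 = e 0) by (pose proof (gap_periodic 0) as Hper; now rewrite Rplus_0_l in Hper).
  assert (HK : forall y, 0 <= y <= 1 -> Rabs (Derive G (f y)) <= K1)
    by (intros y _; apply HK1, f_range).
  assert (Hq : forall y, 0 <= y <= 1 -> Rabs (q y / e y - Derive G (f y)) <= M2 * delta).
  { intros y _. eapply Rle_trans; [apply (gap_quotient_error M2 HL)|].
    - intro z. specialize (Hdelta z). lra.
    - apply Rmult_le_compat_l; auto. }
  pose proof (ln_oscillation_le e q (fun x => Derive G (f x)) (s * h) K1 (M2 * delta) gap_pos Hper
    gap_derive (DG_comp_continuous f f_C1) HI HK Hq x Hx).
  apply exp_bounds_of_Rabs_ln_sub; [apply gap_pos | apply gap_pos | lra].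
Qed.

Lemma gap_signed_I1 : RInt (fun x => Derive G (f x)) 0 1 = 0 ->
  s * I1 G g = RInt (fun x => s * (Derive G (g x) - Derive G (f x))) 0 1.
Proof.
  intro HI. rewrite RInt_scal_minus, HI by now apply DG_comp_continuous.
  unfold I1, D1. ring.
Qed.

Lemma gap_signed_increment_le x b :
  (forall y, Rabs (y - f x) <= e x -> Derive (Derive G) y <= b) ->
  s * (Derive G (g x) - Derive G (f x)) <= b * e x.
Proof.
  intro Hb. pose proof (gap_pos x) as Hpos. unfold gap in Hpos |- *.
  apply (scaled_increment_le (Derive G) (Derive (Derive G))); [lra | intros; apply DG_derive|].
  intros y Hy. apply Hb. rewrite <- Rabs_sub_gap.
  apply Rabs_le_between_min_max. rewrite Rmin_comm, Rmax_comm. exact Hy.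
Qed.

Lemma signed_I1_le L l r b1 b2 b3 lo hi :
  RInt (fun x => Derive G (f x)) 0 1 = 0 ->
  0 <= l -> l <= L -> L <= 1 - l ->
  (forall x, 0 <= x <= L - l -> f x = p1) -> (forall x, L <= x <= 1 - l -> f x = p2) ->
  (forall y, Rabs (y - p1) < r -> Derive (Derive G) y <= b1) ->
  (forall y, Rabs (y - p2) < r -> Derive (Derive G) y <= b2) ->
  (forall y, p1 - r < y < p2 + r -> Derive (Derive G) y <= b3) ->
  b1 <= 0 -> 0 <= b2 -> 0 <= b3 ->
  (forall x, 0 <= x <= 1 -> lo <= e x <= hi) -> (forall x, e x < r) ->
  s * I1 G g <= (L - l) * b1 * lo + ((1 - L - l) * b2 + 2 * l * b3) * hi.
Proof.
  intros HI Hl0 HlL HL1 Hp1 Hp2 Hb1 Hb2 Hb3 Hb1n Hb2p Hb3p Hlohi Hr.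
  rewrite (gap_signed_I1 HI).
  replace ((L - l) * b1 * lo + ((1 - L - l) * b2 + 2 * l * b3) * hi) with
    (b1 * lo * (L - l) + b3 * hi * (L - (L - l)) + b2 * hi * ((1 - l) - L)
     + b3 * hi * (1 - (1 - l))) by ring.
  assert (Hnear : forall x y, Rabs (y - f x) <= e x -> Rabs (y - f x) < r)
    by (intros x y Hy; specialize (Hr x); lra).
  assert (Hmid : forall x, s * (Derive G (g x) - Derive G (f x)) <= b3 * e x).
  { intro x. apply gap_signed_increment_le. intros y Hy. apply Hb3.
    specialize (Hnear x y Hy). apply Rabs_def2 in Hnear. pose proof (f_range x). lra. }
  apply RInt_le_piecewise4; try lra.
  { intro x. apply (continuous_scal_r s (fun x => Derive G (g x) - Derive G (f x))).
    apply (continuous_minus (fun x => Derive G (g x)) (fun x => Derive G (f x)));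
      now apply DG_comp_continuous. }
  all: intros x Hx; specialize (Hlohi x ltac:(lra)).
  - apply Rle_trans with (b1 * e x); [|nra].
    apply gap_signed_increment_le. intros y Hy. apply Hb1. rewrite <- (Hp1 x Hx). now apply Hnear.
  - apply Rle_trans with (b3 * e x); [apply Hmid | nra].
  - apply Rle_trans with (b2 * e x); [|nra].
    apply gap_signed_increment_le. intros y Hy. apply Hb2. rewrite <- (Hp2 x Hx). now apply Hnear.
  - apply Rle_trans with (b3 * e x); [apply Hmid | nra].
Qed.

End Solution.

Lemma cell_gap_bound : coercive G ->
  exists C, 1 <= C /\ forall s c g, s * s = 1 -> 0 < c < 1 ->
    cell_sol G (Vpot G f) (RInt f 0 1 + s * c) g -> forall x, 0 < gap s g f x <= C * c.
Proof.
  intro Hcoer.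
  destruct (lipschitz_on_segment_of_C1 G G_derive DG_continuity_pt (p1 - 1) (p2 + 1))
    as [M1 [HM1 HM1L]].
  destruct (continuity_ab_maj G p1 p2) as [pm [Hpm _]].
  { pose proof (f_range 0). lra. }
  { intros p _. apply continuity_pt_filterlim, G_continuous. }
  destruct (coercive_sublevel_bounded G Hcoer (G pm + M1)) as [A [B HAB]].
  destruct (lipschitz_on_segment_of_C1 G G_derive DG_continuity_pt
    (p1 - Rmax (B - p1) (p2 - A)) (p2 + Rmax (B - p1) (p2 - A))) as [M [HM HML]].
  exists (exp (2 * M)). split.
  { rewrite <- exp_0. apply exp_le. lra. }
  intros s c g Hs [Hc0 Hc1] [Hgper [HgC1 [Hgmean [h Hcell]]]] x. split.
  - now apply (gap_pos s c h).
  - apply (gap_harnack s c h g Hs HgC1 Hgper Hcell Hgmean Hc0 M (Rmax (B - p1) (p2 - A)) HML).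
    apply (gap_le_of_sublevel s c h g Hs HgC1 Hgper Hcell Hgmean Hc0 (G pm) M1); auto.
    now apply (gap_rate_bound s c h g).
Qed.

Lemma eventually_signed_I1_neg K1 K2 L l : coercive G ->
  (forall p, p1 <= p <= p2 -> Rabs (Derive G p) <= K1) ->
  (forall p, p1 <= p <= p2 -> Rabs (Derive (Derive G) p) <= K2) ->
  RInt (fun x => Derive G (f x)) 0 1 = 0 ->
  0 < l -> l < L -> l < 1 - L ->
  (forall x, 0 <= x <= L - l -> f x = p1) -> (forall x, L <= x <= 1 - l -> f x = p2) ->
  Derive (Derive G) p1 < 0 -> 0 <= Derive (Derive G) p2 ->
  (L - l) * Derive (Derive G) p1 * exp (- K1)
    + ((1 - L - l) * Derive (Derive G) p2 + 2 * l * K2) * exp K1 < 0 ->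
  exists c0, 0 < c0 /\ forall s c g, s * s = 1 -> 0 < c < c0 ->
    cell_sol G (Vpot G f) (RInt f 0 1 + s * c) g -> s * I1 G g < 0.
Proof.
  intros Hcoer HK1 HK2 HI Hl HlL HL1 Hp1 Hp2 HD2p1 HD2p2 HPsi.
  assert (Hp12 : p1 <= p2) by (pose proof (f_range 0); lra).
  assert (HK2p : forall p, p1 <= p <= p2 -> Derive (Derive G) p <= K2)
    by (intros p Hp; specialize (HK2 p Hp); apply Rabs_le_between in HK2; lra).
  destruct (cell_gap_bound Hcoer) as [C [HC Hgap]].
  destruct (lipschitz_on_segment_of_C1 (Derive G) DG_derive D2G_continuous (p1 - 1) (p2 + 1))
    as [M2 [HM2 HM2L]].
  (* The hypothesis with every constant raised by t, to absorb the errors of order c. *)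
  set (Psi := fun t => (L - l) * (Derive (Derive G) p1 + t) * exp (- (K1 + t))
    + ((1 - L - l) * (Derive (Derive G) p2 + t) + 2 * l * (K2 + t)) * exp (K1 + t)).
  destruct (continuity_pt_neg_near_0 Psi (- Derive (Derive G) p1)) as [t [Ht HPsit]].
  { unfold Psi. reg. }
  { unfold Psi. rewrite !Rplus_0_r. exact HPsi. }
  { lra. }
  destruct (upper_bound_near_segment (Derive (Derive G)) p1 p2 K2 t) as [r [Hr [Hr1 [Hr2 Hr3]]]];
    auto; [lra|].
  destruct (exists_pos_small r t M2 Hr (proj1 Ht) HM2) as [delta0 Hdelta0].
  exists (delta0 / C). split; [apply Rdiv_lt_0_compat; lra|].
  intros s c g Hs Hc Hg.
  assert (HCc : C * c < delta0).
  { destruct Hc as [_ Hc]. apply (Rmult_lt_compat_l C) in Hc; [|lra].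
    now replace (C * (delta0 / C)) with delta0 in Hc by (field; lra). }
  assert (Hc1 : c < 1) by nra.
  pose proof (Hgap s c g Hs (conj (proj1 Hc) Hc1) Hg) as He.
  destruct Hg as [Hgper [HgC1 [Hgmean [h Hcell]]]].
  pose proof (gap_oscillation s c h g Hs HgC1 Hgper Hcell Hgmean (proj1 Hc) K1 M2 (C * c) t
    HK1 HI HM2 HM2L (fun x => proj2 (He x)) ltac:(lra) ltac:(nra)) as Hosc.
  eapply Rle_lt_trans.
  { apply (signed_I1_le s c h g Hs HgC1 Hgper Hcell Hgmean (proj1 Hc) L l r
      (Derive (Derive G) p1 + t) (Derive (Derive G) p2 + t) (K2 + t)
      (gap s g f 0 * exp (- (K1 + t))) (gap s g f 0 * exp (K1 + t))); try lra; auto.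
    - intros y Hy. left. now apply Hr1.
    - intros y Hy. left. now apply Hr2.
    - intros y Hy. left. now apply Hr3.
    - pose proof (HK2 p1 ltac:(lra)). pose proof (Rabs_pos (Derive (Derive G) p1)). lra.
    - intro x. pose proof (He x). lra. }
  replace (_ + _) with (gap s g f 0 * Psi t) by (unfold Psi; ring).
  pose proof (proj1 (He 0)). nra.
Qed.

End CellGap.

Theorem lemma5p4 (G : R -> R) (p1 p2 K1 K2 l : R) (f : R -> R) :
  is_C2 G -> coercive G -> p1 < p2 ->
  D1 G p1 < 0 -> 0 < D1 G p2 ->
  is_max_on (fun p => Rabs (D1 G p)) p1 p2 K1 ->
  is_max_on (fun p => Rabs (D2 G p)) p1 p2 K2 ->
  (* assumptions on f *)
  periodic1 f -> is_C1 f -> lipschitz (Derive f) ->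
  (forall x, p1 <= f x <= p2) ->
  (forall x, 0 <= x <= Lconst G p1 p2 - l -> f x = p1) ->
  (forall x, Lconst G p1 p2 <= x <= 1 - l -> f x = p2) ->
  RInt (fun x => D1 G (f x)) 0 1 = 0 ->
  (* assumptions of the lemma *)
  D2 G p1 < 0 -> 0 <= D2 G p2 ->
  D2 G p1 * D1 G p2 * exp (- K1) < D2 G p2 * D1 G p1 * exp K1 ->
  0 < l < Rmin (Lconst G p1 p2) (1 - Lconst G p1 p2) ->
  (Lconst G p1 p2 - l) * D2 G p1 * exp (- K1)
    + ((1 - Lconst G p1 p2 - l) * D2 G p2 + 2 * l * K2) * exp K1 < 0 ->
  exists c0 : R, 0 < c0 /\
    forall c : R, 0 < c < c0 ->
      (forall g, cell_sol G (Vpot G f) (RInt f 0 1 + c) g -> I1 G g < 0) /\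
      (forall g, cell_sol G (Vpot G f) (RInt f 0 1 - c) g -> 0 < I1 G g).
Proof.
  intros [HGd [HDGd HD2c]] Hcoer _ _ _ [HK1 _] [HK2 _] Hfper Hf _ Hfr HfA HfB HI
    HD2p1 HD2p2 _ [Hl Hlmin] HPsi.
  destruct (eventually_signed_I1_neg G f p1 p2
    (fun x => Derive_correct _ _ (HGd x)) (fun x => Derive_correct _ _ (HDGd x)) Hf Hfper Hfr
    (fun x => proj2 (continuity_pt_filterlim _ _) (HD2c x))
    K1 K2 (Lconst G p1 p2) l Hcoer HK1 HK2 HI Hl
    (Rlt_le_trans _ _ _ Hlmin (Rmin_l _ _)) (Rlt_le_trans _ _ _ Hlmin (Rmin_r _ _))
    HfA HfB HD2p1 HD2p2 HPsi) as [c0 [Hc0 Hneg]].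
  exists c0. split; [exact Hc0|]. intros c Hc. split; intros g Hg.
  - rewrite <- (Rmult_1_l c) in Hg. specialize (Hneg 1 c g (Rmult_1_l 1) Hc Hg). lra.
  - replace (RInt f 0 1 - c) with (RInt f 0 1 + -1 * c) in Hg by ring.
    specialize (Hneg (-1) c g ltac:(ring) Hc Hg). lra.
Qed.
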